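(* Let $R$ be a ring with unity and involution $*$, and let $a,b,c\in R$. The following conditions are equivalent. (1) $a$ is left dual $(b,c)$-core invertible. (2) There exists some $x\in Rc$ such that $bxab=b$, $(xab)^*=xab$ and $xabx=x$. (3) There exists some $x\in R$ such that $bxab=b$, $xR=b^*R$ and $Rx\subseteq Rc$. (4) There exists some $x\in R$ such that $bxab=b$, $l(x)=l(b^* )$ and $Rx\subseteq Rc$. (5) There exists some $x\in R$ such that $bxab=b$, $Rx\subseteq Rc$ and $xR\subseteq b^*R$. (6) There exists some $x\in R$ such that $bxab=b$, $Rx\subseteq Rc$ and $l(b^* )\subseteq l(x)$. (7) There exist a projection $q\in R$ and an idempotent $p\in R$ such that $Rb\subseteq Rq\subseteq Rab$, $Rp\subseteq Rc$ and $abR\subseteq pR$. In this case (with $q,p$ as in (7)), for any inner inverse $(ab)^-$ of $ab$, the element $q(ab)^-p$ is a left dual $(b,c)$-core inverse of $a$.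
   Context: An element $a\in R$ is called left dual $(b,c)$-core invertible if there exists $x\in Rc$ such that $bxab=b$ and $(xab)^*=xab$; such an $x$ is called a left dual $(b,c)$-core inverse of $a$ (it need not be unique). For $x\in R$, $l(x)=\{r\in R: rx=0\}$ is the left annihilator of $x$. A projection is an element $q$ with $q^2=q=q^*$. An inner inverse of $y$ is any $z$ with $yzy=y$. *)

From mathcomp Require Import all_boot all_order all_algebra.
Set Implicit Arguments. Unset Strict Implicit. Unset Printing Implicit Defensive.
Import GRing.Theory.
Local Open Scope ring_scope.

Definition is_involution (R : nzRingType) (star : R -> R) : Prop :=
  [/\ forall x y : R, star (x + y) = star x + star y,
      forall x y : R, star (x * y) = star y * star x &
      forall x : R, star (star x) = x].

Definition in_Rc (R : nzRingType) (x c : R) : Prop := exists s : R, x = s * c.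

Definition lideal_sub (R : nzRingType) (x y : R) : Prop :=
  forall r : R, exists s : R, r * x = s * y.

Definition rideal_sub (R : nzRingType) (x y : R) : Prop :=
  forall r : R, exists s : R, x * r = y * s.

Definition lann (R : nzRingType) (x : R) : R -> Prop := fun r => r * x = 0.
Definition lann_sub (R : nzRingType) (x y : R) : Prop :=
  forall r : R, lann x r -> lann y r.

Definition is_projection (R : nzRingType) (star : R -> R) (q : R) : Prop :=
  q * q = q /\ star q = q.
Definition is_idempotent (R : nzRingType) (p : R) : Prop := p * p = p.

Definition left_dual_core_inverse (R : nzRingType) (star : R -> R) (a b c x : R) : Prop :=
  [/\ in_Rc x c, b * x * a * b = b & star (x * a * b) = x * a * b].

Definition left_dual_core_invertible (R : nzRingType) (star : R -> R) (a b c : R) : Prop :=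
  exists x : R, left_dual_core_inverse star a b c x.

From mathcomp Require Import all_boot all_order all_algebra.
Set Implicit Arguments.
Unset Strict Implicit.
Unset Printing Implicit Defensive.
Import GRing.Theory.
Local Open Scope ring_scope.

(* Everything hinges on the identity (1 - (xab)^* ) b^* = 0, a rewriting of
   (bxab)^* = b^*.  Once l(b^* ) <= l(x), it yields x = (xab)^* x, whence
   xab = (xab)^* xab is a projection and x = xab x; conditions (3)-(6) are then
   different ways of trapping x between this fact and x R <= b^* R.
   Conversely, given q and p as in (7), p fixes ab on the left and q y ab = q,
   so q y p a b = q and q y p is a left dual (b,c)-core inverse. *)

Lemma lideal_subP (R : nzRingType) (x y : R) :
  lideal_sub x y <-> exists s, x = s * y.
Proof.
split=> [/(_ 1) [s]|[s ->] r]; first by rewrite mul1r; exists s.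
by exists (r * s); rewrite mulrA.
Qed.

Lemma rideal_subP (R : nzRingType) (x y : R) :
  rideal_sub x y <-> exists s, x = y * s.
Proof.
split=> [/(_ 1) [s]|[s ->] r]; first by rewrite mulr1; exists s.
by exists (s * r); rewrite mulrA.
Qed.

Lemma rideal_sub_lann (R : nzRingType) (x y : R) :
  rideal_sub x y -> lann_sub y x.
Proof. by move=> /rideal_subP [s ->] r; rewrite /lann mulrA => ->; rewrite mul0r. Qed.

Lemma regular_of_lideal_sandwich (R : nzRingType) (u v q : R) :
  q * q = q -> lideal_sub u q -> lideal_sub q (v * u) ->
  exists y, v * u * y * (v * u) = v * u.
Proof.
move=> qq /lideal_subP [s uq] /lideal_subP [t qvu]; exists t.
have uqu : u * q = u by rewrite uq -mulrA qq.
by rewrite -mulrA -qvu -mulrA uqu.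
Qed.

Section CoreInverses.

Variables (R : nzRingType) (star : R -> R) (a b c : R).

Lemma left_dual_core_inverse_reflexive x :
  left_dual_core_inverse star a b c x ->
  let z := x * a * b * x in
  [/\ in_Rc z c, b * z * a * b = b, star (z * a * b) = z * a * b & z * a * b * z = z].
Proof.
move=> [[s xc] bxab sa] z.
have xabK : x * a * b * (x * a * b) = x * a * b by rewrite -{3}bxab !mulrA.
have zab : z * a * b = x * a * b by move: xabK; rewrite !mulrA.
split; rewrite ?zab //.
- by exists (x * a * b * s); rewrite /z xc !mulrA.
- by rewrite /z !mulrA bxab bxab.
- by rewrite /z mulrA xabK.
Qed.

Lemma left_dual_core_inverse_of_proj q p :
  is_projection star q -> is_idempotent p ->
  lideal_sub b q -> lideal_sub q (a * b) -> lideal_sub p c -> rideal_sub (a * b) p ->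
  forall y, a * b * y * (a * b) = a * b ->
  left_dual_core_inverse star a b c (q * y * p).
Proof.
move=> [qq sq] pp /lideal_subP [s bq] /lideal_subP [t qab] /lideal_subP [v pc].
move=> /rideal_subP [u abp] y aby.
have pab : p * (a * b) = a * b by rewrite abp mulrA pp.
have qyab : q * y * (a * b) = q by rewrite {1}qab -(mulrA t) -(mulrA t) aby.
have xab : q * y * p * a * b = q by rewrite -(mulrA _ a b) -(mulrA _ p) pab.
have bqq : b * q = b by rewrite bq -mulrA qq.
split; rewrite ?xab //.
- by exists (q * y * v); rewrite pc !mulrA.
- have -> : b * (q * y * p) * a * b = b * (q * y * p * a * b) by rewrite !mulrA.
  by rewrite xab bqq.
Qed.

Lemma proj_idem_of_reflexive x :
  in_Rc x c -> b * x * a * b = b -> star (x * a * b) = x * a * b -> x * a * b * x = x ->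
  exists q p, [/\ is_projection star q, is_idempotent p,
    lideal_sub b q /\ lideal_sub q (a * b), lideal_sub p c & rideal_sub (a * b) p].
Proof.
move=> [s xc] bxab sa xabx.
have abxab : a * b * x * (a * b) = a * b by rewrite -{3}bxab !mulrA.
exists (x * a * b), (a * b * x); split.
- by split=> //; rewrite !mulrA xabx.
- by rewrite /is_idempotent !mulrA -(mulrA _ a b) abxab.
- split; apply/lideal_subP.
  + by exists b; rewrite !mulrA bxab.
  + by exists x; rewrite !mulrA.
- by apply/lideal_subP; exists (a * b * s); rewrite xc !mulrA.
- by apply/rideal_subP; exists (a * b); rewrite abxab.
Qed.

End CoreInverses.

Section Involution.

Variables (R : nzRingType) (star : R -> R).
Hypothesis starM : forall x y : R, star (x * y) = star y * star x.
Hypothesis starK : involutive star.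

Lemma selfadjoint_of_fix w : w = star w * w -> star w = w.
Proof. by move=> E; rewrite {1}E starM starK -E. Qed.

Lemma lann_sub_fix a b x :
  b * x * a * b = b -> lann_sub (star b) x -> x = star (x * a * b) * x.
Proof.
move=> bxab /(_ (1 - star (x * a * b))).
rewrite /lann !mulrBl !mul1r -starM !mulrA bxab subrr => /(_ erefl) /eqP.
by rewrite subr_eq0 => /eqP.
Qed.

Lemma lann_sub_reflexive a b x :
  b * x * a * b = b -> lann_sub (star b) x ->
  star (x * a * b) = x * a * b /\ x * a * b * x = x.
Proof.
move=> bxab /(lann_sub_fix bxab) fix_x.
have sa : star (x * a * b) = x * a * b.
  by apply: selfadjoint_of_fix; rewrite {1}fix_x !mulrA.
by split=> //; rewrite -sa -fix_x.
Qed.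

Lemma rideal_sub_star_of_fix a b x :
  x = star (x * a * b) * x -> rideal_sub x (star b).
Proof. by move=> E; apply/rideal_subP; exists (star (x * a) * x); rewrite {1}E starM mulrA. Qed.

Lemma rideal_sub_star_selfadjoint a b x :
  b * x * a * b = b -> star (x * a * b) = x * a * b -> rideal_sub (star b) x.
Proof.
move=> bxab sa; apply/rideal_subP; exists (a * b * star b).
rewrite -{1}bxab.
have -> : b * x * a * b = b * (x * a * b) by rewrite !mulrA.
by rewrite starM sa !mulrA.
Qed.

End Involution.

Theorem theorem2p2 (R : nzRingType) (star : R -> R) (a b c : R) :
  is_involution star ->
  [<->
    (* (1) *) left_dual_core_invertible star a b c;
    (* (2) *) exists x : R, [/\ in_Rc x c, b * x * a * b = b,
                 star (x * a * b) = x * a * b & x * a * b * x = x];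
    (* (3) *) exists x : R, [/\ b * x * a * b = b,
                 rideal_sub x (star b) /\ rideal_sub (star b) x & lideal_sub x c];
    (* (4) *) exists x : R, [/\ b * x * a * b = b,
                 (forall r : R, lann x r <-> lann (star b) r) & lideal_sub x c];
    (* (5) *) exists x : R, [/\ b * x * a * b = b, lideal_sub x c & rideal_sub x (star b)];
    (* (6) *) exists x : R, [/\ b * x * a * b = b, lideal_sub x c & lann_sub (star b) x];
    (* (7) *) exists q p : R, [/\ is_projection star q, is_idempotent p,
                 lideal_sub b q /\ lideal_sub q (a * b),
                 lideal_sub p c & rideal_sub (a * b) p]]
  /\
  (forall q p : R, is_projection star q -> is_idempotent p ->
     lideal_sub b q -> lideal_sub q (a * b) -> lideal_sub p c -> rideal_sub (a * b) p ->
     forall y : R, (a * b) * y * (a * b) = a * b ->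
     left_dual_core_inverse star a b c (q * y * p)).
Proof.
move=> [_ starM starK]; split; last exact: left_dual_core_inverse_of_proj.
tfae.
- by move=> [x /left_dual_core_inverse_reflexive]; exists (x * a * b * x).
- move=> [x [xc bxab sa xabx]]; exists x; split=> //; last exact/lideal_subP.
  split; last exact: (rideal_sub_star_selfadjoint starM bxab sa).
  by apply: (rideal_sub_star_of_fix starM (a := a)); rewrite sa xabx.
- move=> [x [bxab [xb bx] xc]]; exists x; split=> // r.
  by split; apply: rideal_sub_lann.
- move=> [x [bxab lx xc]]; exists x; split=> //.
  by apply/(rideal_sub_star_of_fix starM)/(lann_sub_fix starM bxab) => r /lx.
- move=> [x [bxab xc xb]]; exists x; split=> //; exact: rideal_sub_lann.
- move=> [x [bxab /lideal_subP xc /(lann_sub_reflexive starM starK bxab) [sa xabx]]].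
  exact: (proj_idem_of_reflexive xc bxab sa xabx).
- move=> [q [p [pq pp [bq qab] pc abp]]].
  have [y aby] := regular_of_lideal_sandwich pq.1 bq qab.
  by exists (q * y * p); apply: left_dual_core_inverse_of_proj.
Qed.
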